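(* Let $n\ge 3$ and $m\ge 2$ be integers, and let $F$, $R$ be as in the context. In the group $F/[R,F]$ the following hold: (1) for $1\le i<j-1\le n-2$, the order of $[s_i,s_j]$ divides $m$; (2) for $1\le i\le n-2$, the order of $[s_i,s_{i+1},s_i]$ divides $m$, and the order of $[s_i,s_{i+1},s_is_{i+1}^{-1}]$ divides $\gcd\!\big(m,\binom{m}{2}\big)$; (3) for $1\le i\le n-3$, the order of $[[s_i,s_{i+1}],[s_{i+1},s_{i+2}]]$ divides $\gcd(2,m)$.
   Context: Commutator conventions: $[a,b]=a^{-1}b^{-1}ab$, $a^b=b^{-1}ab$, and commutators are left-normed: $[a_1,\dots,a_k]=[[a_1,\dots,a_{k-1}],a_k]$. Let $F$ be the free group on $s_1,\dots,s_{n-1}$ and let $R$ be the normal closure in $F$ of the following relators: $s_i^m$ ($1\le i\le n-1$); $[s_i,s_j]$ ($1\le i<j-1\le n-2$); $[s_i,s_{i+1},s_i]$ and $[s_i,s_{i+1},s_{i+1}]$ ($1\le i\le n-2$); $[[s_i,s_{i+1}],[s_{i+1},s_{i+2}]]$ ($1\le i\le n-3$). It is known that $F/R\cong \mathrm{UT}_n(\mathbb Z/m\mathbb Z)$ (the group of upper unitriangular $n\times n$ matrices over $\mathbb Z/m\mathbb Z$) via $s_i\mapsto I+E_{i,i+1}$. *)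

From mathcomp Require Import all_boot.
Set Implicit Arguments. Unset Strict Implicit. Unset Printing Implicit Defensive.

(* A letter (i, false) stands for s_i, (i, true) for s_i^{-1}. *)
Definition letter := (nat * bool)%type.
Definition word := seq letter.

Definition linv (a : letter) : letter := (a.1, ~~ a.2).
Definition winv (w : word) : word := rev (map linv w).
Definition gen (i : nat) : word := [:: (i, false)].
Fixpoint wpow (w : word) (k : nat) : word :=
  if k is k'.+1 then w ++ wpow w k' else [::].
Definition wcomm (a b : word) : word := winv a ++ winv b ++ a ++ b.
Definition wconj (a b : word) : word := winv b ++ a ++ b.

(* Free equivalence of words: the equivalence relation generated by
   deleting a cancelling pair x x^-1. Words modulo freeq = free group. *)
Inductive freeq : word -> word -> Prop :=
| freeq_red (u v : word) (a : letter) : freeq (u ++ a :: linv a :: v) (u ++ v)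
| freeq_refl (u : word) : freeq u u
| freeq_sym (u v : word) : freeq u v -> freeq v u
| freeq_trans (u v w : word) : freeq u v -> freeq v w -> freeq u w.

(* Words in the generators s_1, ..., s_{n-1}, i.e. words representing
   elements of F. *)
Definition wordin (n : nat) (w : word) : bool :=
  all (fun a : letter => (1 <= a.1 <= n - 1)) w.

(* ncl n S w : (the class of) w lies in the normal closure in F of the
   set S (more precisely of the elements represented by words in S). *)
Inductive ncl (n : nat) (S : word -> Prop) : word -> Prop :=
| ncl_gen (w : word) : S w -> ncl n S w
| ncl_one : ncl n S [::]
| ncl_mul (u v : word) : ncl n S u -> ncl n S v -> ncl n S (u ++ v)
| ncl_inv (u : word) : ncl n S u -> ncl n S (winv u)
| ncl_conj (u g : word) : wordin n g -> ncl n S u -> ncl n S (wconj u g)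
| ncl_eq (u v : word) : freeq u v -> ncl n S u -> ncl n S v.

(* The defining relators of UT_n(Z/mZ). *)
Definition relator (n m : nat) (r : word) : Prop :=
  (exists i, [/\ 1 <= i, i <= n - 1 & r = wpow (gen i) m])
  \/ (exists i j, [/\ 1 <= i, i < j.-1, j.-1 <= n - 2
                    & r = wcomm (gen i) (gen j)])
  \/ (exists i, [/\ 1 <= i, i <= n - 2 &
        (r = wcomm (wcomm (gen i) (gen i.+1)) (gen i)
         \/ r = wcomm (wcomm (gen i) (gen i.+1)) (gen i.+1))])
  \/ (exists i, [/\ 1 <= i, i <= n - 3 &
        r = wcomm (wcomm (gen i) (gen i.+1)) (wcomm (gen i.+1) (gen i.+2))]).

Definition inR (n m : nat) (w : word) : Prop := ncl n (relator n m) w.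

Definition RFgen (n m : nat) (w : word) : Prop :=
  exists r f, [/\ wordin n r, wordin n f, inR n m r & w = wcomm r f].

Definition inRF (n m : nat) (w : word) : Prop := ncl n (RFgen n m) w.

Definition order_dvd_FRF (n m : nat) (g : word) (k : nat) : Prop :=
  inRF n m (wpow g k).

From HB Require Import structures.
From mathcomp Require Import all_boot zify boolp.
Set Implicit Arguments. Unset Strict Implicit. Unset Printing Implicit Defensive.

(* The images in F/[R,F] of elements of R are central.  Hence each relator
   listed in the presentation becomes central, and the statement reduces to
   three facts of pure commutator calculus, valid in ANY group in which the
   relevant elements are central:
   - if x^m and [x,y] are central then [x,y]^m = [x^m,y] = 1, and similarly
     [[x,y],x]^m = [[x,y],x^m] = 1;
   - if moreover [[x,y],x], [[x,y],y] and y^m are central, expanding the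
     conjugates x^(y^m) = x and y^(x^m) = y gives [[x,y],x]^C(m,2) =
     [[x,y],y]^C(m,2), whence [[x,y],x y^-1]^gcd(m,C(m,2)) = 1;
   - with a = [x,y], b = [y,z] and all the commutators that the presentation
     makes central, the Hall-Witt identity gives [a,b]^2 = 1, while
     [a,b]^m = [a,b^m] = 1 because b^m is a power of [b,z]. *)

Lemma linvK : involutive linv.
Proof. by case=> i b; rewrite /linv /= negbK. Qed.

Lemma winv_cat u v : winv (u ++ v) = winv v ++ winv u.
Proof. by rewrite /winv map_cat rev_cat. Qed.

Lemma winvK : involutive winv.
Proof.
by move=> u; rewrite /winv map_rev revK -map_comp map_id_in // => a _; apply: linvK.
Qed.

Lemma wordin_cat n u v : wordin n (u ++ v) = wordin n u && wordin n v.
Proof. exact: all_cat. Qed.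

Lemma wordin_winv n u : wordin n (winv u) = wordin n u.
Proof. by rewrite /wordin /winv all_rev all_map. Qed.

Lemma wordin_wcomm n u v : wordin n (wcomm u v) = wordin n u && wordin n v.
Proof. by rewrite /wcomm !wordin_cat !wordin_winv; case: (wordin n u); case: (wordin n v). Qed.

Lemma wordin_gen n i : wordin n (gen i) = (1 <= i <= n - 1).
Proof. by rewrite /wordin /= andbT. Qed.

Lemma wordin_wpow n u k : wordin n u -> wordin n (wpow u k).
Proof. by move=> hu; elim: k => //= k IH; rewrite wordin_cat hu IH. Qed.

Lemma freeq_ctx u v p s : freeq u v -> freeq (p ++ u ++ s) (p ++ v ++ s).
Proof.
elim=> {u v} [u v a | u | u v _ IH | u v w _ IH1 _ IH2].
- by have := freeq_red (p ++ u) (v ++ s) a; rewrite -!catA.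
- exact: freeq_refl.
- exact: freeq_sym.
- exact: freeq_trans IH2.
Qed.

Lemma freeq_cancel u : freeq (u ++ winv u) [::].
Proof.
elim: u => [|a u IH] /=; first exact: freeq_refl.
rewrite /winv /= rev_cons -cats1 -/(winv u).
apply: (@freeq_trans _ ([:: a] ++ [::] ++ [:: linv a])).
  by rewrite catA; apply: (freeq_ctx [:: a] [:: linv a] IH).
exact: (freeq_red [::] [::] a).
Qed.

Lemma freeq_cancelV u : freeq (winv u ++ u) [::].
Proof. by have := freeq_cancel (winv u); rewrite winvK. Qed.

Lemma freeq_ins p s x : freeq (p ++ x ++ winv x ++ s) (p ++ s).
Proof. by have := freeq_ctx p s (freeq_cancel x); rewrite -catA. Qed.

Lemma freeq_insV p s x : freeq (p ++ winv x ++ x ++ s) (p ++ s).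
Proof. by have := freeq_ctx p s (freeq_cancelV x); rewrite -catA. Qed.

Local Open Scope group_scope.

Ltac group_normalize := rewrite /commg /conjg ?invgM ?invgK -?mulgA;
  rewrite ?(mulKg, mulVKg, mulgV, mulVg, mulg1, mul1g).

Section CommutatorCalculus.
Variable G : groupType.
Implicit Types x y z a b g h : G.

Definition central g := forall h, commute g h.

Lemma centralV g : central g -> central g^-1.
Proof. by move=> cg h; apply/commute_sym/commuteV/commute_sym. Qed.

Lemma centralX g k : central g -> central (g ^+ k).
Proof. by move=> cg h; apply/commute_sym/commuteX/commute_sym. Qed.

Lemma conjg_central g h : central g -> g ^ h = g.
Proof. by move=> cg; rewrite /conjg cg mulKg. Qed.

Lemma conjg_by_central g h : central h -> g ^ h = g.
Proof. by move=> ch; rewrite /conjg -ch mulKg. Qed.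

Lemma commg_centrall g h : central g -> [~ g, h] = 1.
Proof. by move=> cg; rewrite commgEl conjg_central ?mulVg. Qed.

Lemma commg_centralr g h : central g -> [~ h, g] = 1.
Proof. by move=> cg; rewrite commgEl conjg_by_central ?mulVg. Qed.

Lemma commMg x y z : [~ x * y, z] = [~ x, z] ^ y * [~ y, z].
Proof. by group_normalize. Qed.

Lemma commgM x y z : [~ x, y * z] = [~ x, z] * [~ x, y] ^ z.
Proof. by group_normalize. Qed.

Lemma commVg x y : [~ x^-1, y] = [~ x, y]^-1 ^ x^-1.
Proof. by group_normalize. Qed.

Lemma commgV x y : [~ x, y^-1] = [~ x, y]^-1 ^ y^-1.
Proof. by group_normalize. Qed.

Lemma conjg_comm x y : x ^ y = x * [~ x, y].
Proof. by group_normalize. Qed.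

Lemma commgVconj x y : [~ y, x^-1] = x ^ y * x^-1.
Proof. by group_normalize. Qed.

Lemma commMg_central q x y : central q -> [~ x * q, y] = [~ x, y].
Proof.
by move=> cq; rewrite commMg (conjg_by_central _ cq) (commg_centrall _ cq) mulg1.
Qed.

Lemma commgM_central q x y : central q -> [~ x, y * q] = [~ x, y].
Proof.
by move=> cq; rewrite commgM (commg_centralr _ cq) mul1g (conjg_by_central _ cq).
Qed.

Lemma commXg x y k : central [~ x, y] -> [~ x ^+ k, y] = [~ x, y] ^+ k.
Proof.
move=> c; elim: k => [|k IH]; first by rewrite !expg0 comm1g.
by rewrite !expgS commMg IH conjg_central.
Qed.

Lemma commgX x y k : central [~ x, y] -> [~ x, y ^+ k] = [~ x, y] ^+ k.
Proof.
move=> c; elim: k => [|k IH]; first by rewrite !expg0 commg1.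
by rewrite expgS commgM IH conjg_central // -expgSr.
Qed.

Lemma conjgX_class2 u v k : central [~ [~ u, v], v] ->
  u ^ (v ^+ k) = u * [~ u, v] ^+ k * [~ [~ u, v], v] ^+ 'C(k, 2).
Proof.
set d := [~ u, v]; set s := [~ d, v] => cs.
have uv : u ^ v = u * d by rewrite conjg_comm.
have dv : d ^ v = d * s by rewrite conjg_comm.
have conj_d j : d ^ (v ^+ j) = d * s ^+ j.
  elim: j => [|j IH]; first by rewrite expg0 conjg1 mulg1.
  by rewrite expgS conjgM dv conjMg IH conjg_central // -mulgA -expgSr.
clearbody d s; elim: k => [|k IH]; first by rewrite expg0 conjg1 !mulg1.
rewrite expgS conjgM uv conjMg IH conj_d binS bin1.
by rewrite expgnDr expgSr -!mulgA [s ^+ _ * (d * _)]mulgA (centralX _ cs d) -mulgA.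
Qed.

Lemma commgX_class2 u v m : central (v ^+ m) -> central [~ [~ u, v], v] ->
  [~ u, v] ^+ m = ([~ [~ u, v], v] ^+ 'C(m, 2))^-1.
Proof.
move=> cvm cs; apply/eqP; rewrite -mulg_eq1; apply/eqP/(mulgI u).
by rewrite mulgA -conjgX_class2 // conjg_by_central // mulg1.
Qed.

Lemma hall_witt x y z :
  [~ [~ x, y^-1], z] ^ y * [~ [~ y, z^-1], x] ^ z * [~ [~ z, x^-1], y] ^ x = 1.
Proof. by group_normalize. Qed.

Lemma expg_gcdn g p r : 0 < p -> g ^+ p = 1 -> g ^+ r = 1 -> g ^+ gcdn p r = 1.
Proof.
move=> p0 hp hr; case: (Bezoutl r p0) => a _ /dvdnP [k hk].
have : g ^+ (gcdn p r + a * r) = 1 by rewrite hk mulnC expgnA hp expg1n.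
by rewrite expgnDr mulnC expgnA hr expg1n mulg1.
Qed.

Lemma commg_expl_eq1 x y m : central (x ^+ m) -> central [~ x, y] ->
  [~ x, y] ^+ m = 1.
Proof. by move=> cxm c; rewrite -commXg // commg_centrall. Qed.

Lemma commg_expr_eq1 x y m : central (y ^+ m) -> central [~ x, y] ->
  [~ x, y] ^+ m = 1.
Proof. by move=> cym c; rewrite -commgX // commg_centralr. Qed.

(* Second half of (2): with a = [x,y], [a, x y^-1] = [a,y]^-1 [a,x]; both
   factors have order dividing m, and expanding x^(y^m) = x and
   y^(x^m) = y shows that they have the same C(m,2)-th power. *)
Lemma comm_class2_expgcd_eq1 x y m : 0 < m ->
  central (x ^+ m) -> central (y ^+ m) ->
  central [~ [~ x, y], x] -> central [~ [~ x, y], y] ->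
  [~ [~ x, y], x * y^-1] ^+ gcdn m 'C(m, 2) = 1.
Proof.
set a := [~ x, y]; set t1 := [~ a, x]; set t2 := [~ a, y].
move=> m_gt0 cxm cym c1 c2.
have -> : [~ a, x * y^-1] = t2^-1 * t1.
  by rewrite commgM commgV -/t2 !conjg_central //; apply: centralV.
have ct : commute t2^-1 t1 by apply: centralV.
apply: expg_gcdn => //; rewrite expgMn // expVgn.
  by rewrite !commg_expr_eq1 // invg1 mulg1.
have at2 : a ^+ m = (t2 ^+ 'C(m, 2))^-1 by apply: commgX_class2.
have t1_yx : [~ [~ y, x], x] = t1^-1.
  by rewrite -(invgR x y) commVg conjg_central //; apply: centralV.
have at1 : a^-1 ^+ m = (t1^-1 ^+ 'C(m, 2))^-1.
  rewrite invgR -t1_yx; apply: commgX_class2 => //.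
  by rewrite t1_yx; apply: centralV.
rewrite !expVgn invgK in at1.
by rewrite -at2 -at1 mulgV.
Qed.

(* Part (3): with a = [x,y], b = [y,z], the Hall-Witt identity for y, z, a
   collapses to [a,b]^2 = 1, and [a,b]^m = [a,b^m] = 1 since b^m is a power
   of the central element [b,z]. *)
Lemma comm_comm_expgcd_eq1 x y z m :
  central [~ x, z] -> central [~ [~ x, y], x] -> central [~ [~ x, y], y] ->
  central [~ [~ y, z], y] -> central [~ [~ y, z], z] ->
  central [~ [~ x, y], [~ y, z]] -> central (z ^+ m) ->
  [~ [~ x, y], [~ y, z]] ^+ gcdn 2 m = 1.
Proof.
set a := [~ x, y]; set b := [~ y, z]; set c := [~ a, b].
set t1 := [~ a, x]; set t2 := [~ a, y]; set t3 := [~ b, y]; set t4 := [~ b, z].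
move=> cxz c1 c2 c3 c4 cc czm.
apply: expg_gcdn => //; last first.
  have bm : b ^+ m = (t4 ^+ 'C(m, 2))^-1 by apply: commgX_class2.
  by rewrite -commgX // bm commg_centralr //; apply/centralV/centralX.
set w := [~ x, b].
have za : [~ z, a^-1] = w * c.
  rewrite commgVconj /a conjRg (conjg_comm x z) (conjg_comm y z) -/b.
  rewrite commMg_central // commgM -/a -/w (conjg_comm a b) -/c.
  by rewrite -(mulgA w) -(cc a) mulgK.
have wy : [~ w, y] = c.
  rewrite commgEl /w conjRg (conjg_comm x y) (conjg_comm b y) -/a -/t3.
  rewrite commgM_central // commMg -/c -/w conjRg (conjg_comm x a) (conjg_comm b a).
  rewrite -(invgR a x) -/t1 (commMg_central _ _ (centralV c1)).
  by rewrite -(invgR a b) -/c (commgM_central _ _ (centralV cc)) mulKg.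
have bz : b ^ z^-1 = b * t4^-1.
  apply: (@conjg_inj _ z); rewrite conjgKV conjMg (conjg_comm b z) -/t4.
  by rewrite (conjg_central _ (centralV c4)) mulgK.
have := hall_witt y z a.
rewrite za (commMg_central _ _ cc) wy (conjg_central _ cc).
rewrite (commgV a y) -/t2 (conjg_central _ (centralV c2)).
rewrite (commg_centrall _ (centralV c2)) conj1g mulg1.
rewrite (commgV y z) -/b conjVg bz invgM invgK (c4 b^-1) (commMg_central _ _ c4).
rewrite commVg -(invgR a b) -/c invgK !(conjg_central _ cc).
by rewrite expgS expg1.
Qed.

End CommutatorCalculus.

Definition Fword n := {w : word | wordin n w}.

Section QuotientByNormalClosure.
Variables (n : nat) (S : word -> Prop).
Local Notation W := (Fword n).
Local Notation N := (ncl n S).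

Definition ncl_equiv (u v : W) : Prop := N (winv (val u) ++ val v).

Lemma ncl_equiv_refl u : ncl_equiv u u.
Proof. exact: ncl_eq (freeq_sym (freeq_cancelV _)) (ncl_one _ _). Qed.

Lemma ncl_equiv_sym u v : ncl_equiv u v -> ncl_equiv v u.
Proof. by move/ncl_inv; rewrite /ncl_equiv winv_cat winvK. Qed.

Lemma ncl_equiv_trans u v w : ncl_equiv u v -> ncl_equiv v w -> ncl_equiv u w.
Proof.
move=> h1 h2; apply: ncl_eq (ncl_mul h1 h2).
by rewrite -catA; apply: freeq_ins.
Qed.

Lemma wordin_mul (u v : W) : wordin n (val u ++ val v).
Proof. by rewrite wordin_cat (valP u) (valP v). Qed.

Lemma wordin_div (u : W) : wordin n (winv (val u)).
Proof. by rewrite wordin_winv (valP u). Qed.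

Definition wmul (u v : W) : W := exist _ (val u ++ val v) (wordin_mul u v).
Definition wdiv (u : W) : W := exist _ (winv (val u)) (wordin_div u).
Definition wone : W := exist _ [::] erefl.

Lemma ncl_equiv_mull u u' v : ncl_equiv u u' -> ncl_equiv (wmul u v) (wmul u' v).
Proof.
move=> h; have := ncl_conj (valP v) h.
by rewrite /ncl_equiv /wmul /= /wconj winv_cat -!catA.
Qed.

Lemma ncl_equiv_mulr u v v' : ncl_equiv v v' -> ncl_equiv (wmul u v) (wmul u v').
Proof.
apply: ncl_eq; rewrite /wmul /= winv_cat -catA.
exact/freeq_sym/freeq_insV.
Qed.

Lemma ncl_equiv_inv u u' : ncl_equiv u u' -> ncl_equiv (wdiv u) (wdiv u').
Proof.
move/ncl_equiv_sym=> h; have := ncl_conj (valP (wdiv u)) h.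
apply: ncl_eq; rewrite /ncl_equiv /wdiv /= /wconj winvK -!catA.
by have := freeq_ins (val u ++ winv (val u')) [::] (val u); rewrite -!catA !cats0.
Qed.

Lemma ncl_equiv_freeq u v : freeq (val u) (val v) -> ncl_equiv u v.
Proof.
move=> h; apply: ncl_eq (ncl_one _ _); apply/freeq_sym.
apply: freeq_trans (freeq_cancelV (val u)).
by have := freeq_ctx (winv (val u)) [::] (freeq_sym h); rewrite !cats0.
Qed.

Definition Fquot := {P : W -> Prop | exists u, P = ncl_equiv u}.
Definition toQ (u : W) : Fquot := exist _ (ncl_equiv u) (ex_intro _ u erefl).

Lemma toQ_eq u v : toQ u = toQ v <-> ncl_equiv u v.
Proof.
split=> [/(congr1 sval) /= e | h].
  by apply: ncl_equiv_sym; rewrite -e; apply: ncl_equiv_refl.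
have e : ncl_equiv u = ncl_equiv v.
  apply: funext => w; apply: propext; split; last exact: ncl_equiv_trans.
  exact/ncl_equiv_trans/ncl_equiv_sym.
rewrite /toQ; move: (ex_intro _ u _) (ex_intro _ v _); rewrite e => p1 p2.
by congr exist; apply: Prop_irrelevance.
Qed.

Lemma toQ_val u v : val u = val v -> toQ u = toQ v.
Proof. by move=> e; congr toQ; apply: val_inj. Qed.

Lemma toQ_surj (g : Fquot) : exists u, g = toQ u.
Proof.
case: g => P [u e]; exists u; subst P.
by congr exist; apply: Prop_irrelevance.
Qed.

Definition qrepr (g : Fquot) : W := projT1 (cid (toQ_surj g)).

Lemma qreprK g : toQ (qrepr g) = g.
Proof. by rewrite /qrepr; case: (cid (toQ_surj g)) => u /= ->. Qed.

Lemma qrepr_equiv u : ncl_equiv (qrepr (toQ u)) u.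
Proof. by apply/toQ_eq; rewrite qreprK. Qed.

Definition qmul (g h : Fquot) : Fquot := toQ (wmul (qrepr g) (qrepr h)).
Definition qinv (g : Fquot) : Fquot := toQ (wdiv (qrepr g)).
Definition qone : Fquot := toQ wone.

Lemma qmulE u v : qmul (toQ u) (toQ v) = toQ (wmul u v).
Proof.
apply/toQ_eq; apply: ncl_equiv_trans (ncl_equiv_mull _ (qrepr_equiv u)) _.
exact: ncl_equiv_mulr (qrepr_equiv v).
Qed.

Lemma qinvE u : qinv (toQ u) = toQ (wdiv u).
Proof. exact/toQ_eq/ncl_equiv_inv/qrepr_equiv. Qed.

Lemma qmulA : associative qmul.
Proof.
move=> x y z; case: (toQ_surj x) (toQ_surj y) (toQ_surj z) => [u ->] [v ->] [w ->].
by rewrite !qmulE; apply: toQ_val; rewrite /= catA.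
Qed.

Lemma qmul1 : left_id qone qmul.
Proof. by move=> x; case: (toQ_surj x) => [u ->]; rewrite qmulE; apply: toQ_val. Qed.

Lemma qmulg1 : right_id qone qmul.
Proof.
by move=> x; case: (toQ_surj x) => [u ->]; rewrite qmulE; apply: toQ_val; rewrite /= cats0.
Qed.

Lemma qmulV : left_inverse qone qinv qmul.
Proof.
move=> x; case: (toQ_surj x) => [u ->]; rewrite qinvE qmulE.
exact/toQ_eq/ncl_equiv_freeq/freeq_cancelV.
Qed.

Lemma qmulgV : right_inverse qone qinv qmul.
Proof.
move=> x; case: (toQ_surj x) => [u ->]; rewrite qinvE qmulE.
exact/toQ_eq/ncl_equiv_freeq/freeq_cancel.
Qed.

End QuotientByNormalClosure.

HB.instance Definition _ n S := gen_eqMixin (Fquot n S).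
HB.instance Definition _ n S := gen_choiceMixin (Fquot n S).
HB.instance Definition _ n S := isGroup.Build (Fquot n S)
  (@qmulA n S) (@qmul1 n S) (@qmulg1 n S) (@qmulV n S) (@qmulgV n S).

Section Evaluation.
Variables (n : nat) (S : word -> Prop).
Local Notation Q := (Fquot n S).
Local Notation N := (ncl n S).

(* Evaluation of an arbitrary word in F/N: letters outside the range of
   the generators are sent to 1, so that evaluation is a morphism from the
   free monoid on all letters, with no side conditions. *)
Definition eval_letter (a : letter) : Q :=
  if insub [:: a] is Some u then toQ S u else 1.

Definition eval (w : word) : Q := foldr (fun a g => eval_letter a * g) 1 w.

Lemma eval_cat u v : eval (u ++ v) = eval u * eval v.
Proof. by elim: u => [|a u IH] /=; rewrite ?mul1g // IH mulgA. Qed.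

Lemma eval_linv a : eval_letter (linv a) = (eval_letter a)^-1.
Proof.
have same_dom : wordin n [:: linv a] = wordin n [:: a] by [].
rewrite /eval_letter; case: (boolP (wordin n [:: a])) => ha; last first.
  by rewrite !insubN ?same_dom ?invg1.
have ha' : wordin n [:: linv a] by rewrite same_dom.
rewrite (insubT _ ha) (insubT _ ha'); apply/esym/mulg1_eq; rewrite [_ * _]qmulE.
exact/toQ_eq/ncl_equiv_freeq/(freeq_red [::] [::]).
Qed.

Lemma eval_winv w : eval (winv w) = (eval w)^-1.
Proof.
elim: w => [|a w IH]; first by rewrite invg1.
by rewrite /winv /= rev_cons -cats1 eval_cat -/(winv w) IH /= mulg1 eval_linv invgM.
Qed.

Lemma eval_wpow w k : eval (wpow w k) = eval w ^+ k.
Proof. by elim: k => [|k IH] //=; rewrite eval_cat IH expgS. Qed.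

Lemma eval_wcomm u v : eval (wcomm u v) = [~ eval u, eval v].
Proof. by rewrite /wcomm !eval_cat !eval_winv commgEl /conjg !mulgA. Qed.

Lemma eval_toQ (u : Fword n) : eval (val u) = toQ S u.
Proof.
case: u => w; elim: w => [|a w IH] hw; first exact: toQ_val.
have [ha hw'] : wordin n [:: a] /\ wordin n w.
  by move: hw; rewrite -cat1s wordin_cat => /andP.
by rewrite /= (IH hw') /eval_letter insubT [_ * _]qmulE; apply: toQ_val.
Qed.

Lemma eval_eq1 w : wordin n w -> eval w = 1 -> N w.
Proof.
move=> hw; rewrite -[w]/(val (exist _ w hw : Fword n)) eval_toQ.
move/toQ_eq/ncl_inv; rewrite /ncl_equiv /= cats0 winvK; exact.
Qed.

Lemma eval_central r : wordin n r -> (forall f, wordin n f -> N (wcomm r f)) ->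
  central (eval r).
Proof.
move=> hr hN g; case: (toQ_surj g) => [v ->].
rewrite -[r]/(val (exist _ r hr : Fword n)) eval_toQ /commute [LHS]qmulE [RHS]qmulE.
apply/toQ_eq; have := ncl_inv (hN _ (valP v)).
by rewrite /ncl_equiv /= /wcomm !winv_cat !winvK -!catA.
Qed.

End Evaluation.

Section UnitriangularQuotient.
Variables n m : nat.
Local Notation ev := (eval n (RFgen n m)).
Local Notation s i := (ev (gen i)).

Lemma relator_central r : wordin n r -> relator n m r -> central (ev r).
Proof.
move=> hr hrel; apply: eval_central => // f hf.
by apply: ncl_gen; exists r, f; split => //; apply: ncl_gen.
Qed.

Lemma order_dvd_FRF_eval w k : wordin n w -> ev w ^+ k = 1 -> order_dvd_FRF n m w k.
Proof. by move=> hw hk; apply: eval_eq1; rewrite ?wordin_wpow // eval_wpow. Qed.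

Lemma central_gen_expn i : 1 <= i -> i <= n - 1 -> central (s i ^+ m).
Proof.
move=> hi hin; rewrite -eval_wpow; apply: relator_central.
  by rewrite wordin_wpow ?wordin_gen ?hi.
by left; exists i.
Qed.

Lemma central_comm_far i j : 1 <= i -> i < j.-1 -> j.-1 <= n - 2 ->
  central [~ s i, s j].
Proof.
move=> hi hij hj; rewrite -eval_wcomm; apply: relator_central.
  by rewrite wordin_wcomm !wordin_gen; lia.
by right; left; exists i, j.
Qed.

Lemma central_comm_adj i : 1 <= i -> i <= n - 2 ->
  central [~ [~ s i, s i.+1], s i] /\ central [~ [~ s i, s i.+1], s i.+1].
Proof.
move=> hi hin; rewrite -!eval_wcomm.
split; (apply: relator_central; first by rewrite !wordin_wcomm !wordin_gen; lia).
  by right; right; left; exists i; split => //; left.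
by right; right; left; exists i; split => //; right.
Qed.

Lemma central_comm_comm i : 1 <= i -> i <= n - 3 ->
  central [~ [~ s i, s i.+1], [~ s i.+1, s i.+2]].
Proof.
move=> hi hin; rewrite -!eval_wcomm; apply: relator_central.
  by rewrite !wordin_wcomm !wordin_gen; lia.
by right; right; right; exists i.
Qed.

End UnitriangularQuotient.

Theorem mainTheorem1 (n m : nat) (hn : 3 <= n) (hm : 2 <= m) :
  (forall i j, 1 <= i -> i < j.-1 -> j.-1 <= n - 2 ->
     order_dvd_FRF n m (wcomm (gen i) (gen j)) m)
  /\ (forall i, 1 <= i -> i <= n - 2 ->
     order_dvd_FRF n m (wcomm (wcomm (gen i) (gen i.+1)) (gen i)) m
     /\ order_dvd_FRF n m
          (wcomm (wcomm (gen i) (gen i.+1)) (gen i ++ winv (gen i.+1)))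
          (gcdn m 'C(m, 2)))
  /\ (forall i, 1 <= i -> i <= n - 3 ->
     order_dvd_FRF n m
       (wcomm (wcomm (gen i) (gen i.+1)) (wcomm (gen i.+1) (gen i.+2)))
       (gcdn 2 m)).
Proof.
pose wordinE := (wordin_wcomm, wordin_cat, wordin_winv, wordin_gen).
split; [|split].
- move=> i j hi hij hj; apply: order_dvd_FRF_eval; first by rewrite !wordinE; lia.
  rewrite eval_wcomm; apply: commg_expl_eq1 (central_comm_far hi hij hj).
  by apply: central_gen_expn; lia.
- move=> i hi hin; have [cl cr] := central_comm_adj m hi hin.
  split; apply: order_dvd_FRF_eval; rewrite ?wordinE; try lia.
    by rewrite !eval_wcomm; apply: commg_expr_eq1 cl; apply: central_gen_expn; lia.
  rewrite !eval_wcomm eval_cat eval_winv.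
  by apply: comm_class2_expgcd_eq1 => //; try lia; apply: central_gen_expn; lia.
- move=> i hi hin; apply: order_dvd_FRF_eval; first by rewrite !wordinE; lia.
  have [c1 c2] := central_comm_adj m hi (ltac:(lia) : i <= n - 2).
  have [c3 c4] := central_comm_adj m (ltac:(lia) : 1 <= i.+1) (ltac:(lia) : i.+1 <= n - 2).
  rewrite !eval_wcomm; apply: comm_comm_expgcd_eq1 => //.
  - by apply: central_comm_far; lia.
  - exact: central_comm_comm.
  - by apply: central_gen_expn; lia.
Qed.
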